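(* Let $r>0$, $d>0$ with $d\sqrt{2}<r$, and let $X\subseteq\mathbb{R}^2$ be a bounded $r$-regular set whose boundary contains no point of $d\mathbb{Z}^2$. Let $C$ be a grey pixel of the lattice $d\mathbb{Z}^2$ having two direct neighbour pixels (pixels sharing a side with $C$) which share a vertex with each other and which are either both black or both white. Let $p$ be the vertex of $C$ that belongs to neither of these two neighbour pixels. If $q\in\partial X\cap C$, then $q\in B_d(p)$, the open ball of radius $d$ centred at $p$.
   Context: A closed set $X\subseteq\mathbb{R}^2$ is $r$-regular if for each $x\in\partial X$ there are two open balls of radius $r$, $B_r(x_b)\subseteq X$ and $B_r(x_w)\subseteq \mathbb{R}^2\setminus X$, with $\overline{B_r(x_b)}\cap\overline{B_r(x_w)}=\{x\}$. Pixels are the closed squares $[dk,d(k+1)]\times[dl,d(l+1)]$, $k,l\in\mathbb{Z}$. A pixel $P$ is black if $\mathrm{area}(X\cap P)=d^2$, white if $\mathrm{area}(X\cap P)=0$, and grey otherwise. *)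

From HB Require Import structures.
From mathcomp Require Import all_boot all_order all_algebra.
From mathcomp Require Import all_classical all_reals all_analysis.
Set Implicit Arguments. Unset Strict Implicit. Unset Printing Implicit Defensive.
Import Order.TTheory GRing.Theory Num.Theory.
Local Open Scope classical_set_scope.
Local Open Scope ring_scope.

Section Defs.
Variable R : realType.
Local Notation pt := (R * R)%type.

Definition edist (x y : pt) : R :=
  Num.sqrt ((x.1 - y.1) ^+ 2 + (x.2 - y.2) ^+ 2).

Definition oball (c : pt) (r : R) : set pt := [set x | edist c x < r].
Definition cball (c : pt) (r : R) : set pt := [set x | edist c x <= r].

Definition bdry (X : set pt) : set pt :=
  [set x | forall e : R, 0 < e ->
     (exists y, oball x e y /\ X y) /\ (exists y, oball x e y /\ ~ X y)].

Definition bounded2 (X : set pt) : Prop :=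
  exists M : R, forall x, X x -> edist (0, 0) x <= M.

Definition eclosed (X : set pt) : Prop :=
  forall x, ~ X x -> exists e : R, 0 < e /\ oball x e `<=` ~` X.

Definition r_regular (r : R) (X : set pt) : Prop :=
  eclosed X /\
  forall x, bdry X x ->
    exists xb xw : pt,
      oball xb r `<=` X /\ oball xw r `<=` ~` X /\
      cball xb r `&` cball xw r = [set x].

Definition pixel (d : R) (k l : int) : set pt :=
  [set x | d * k%:~R <= x.1 <= d * (k + 1)%:~R /\
           d * l%:~R <= x.2 <= d * (l + 1)%:~R].

Definition area : set pt -> \bar R :=
  (@lebesgue_measure R \x @lebesgue_measure R)%E.

Definition black (X : set pt) (d : R) (k l : int) : Prop :=
  area (X `&` pixel d k l) = (d ^+ 2)%:E.
Definition white (X : set pt) (d : R) (k l : int) : Prop :=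
  area (X `&` pixel d k l) = 0%E.
Definition grey (X : set pt) (d : R) (k l : int) : Prop :=
  ~ black X d k l /\ ~ white X d k l.

Definition direct_neighbour (k l k' l' : int) : Prop :=
  (`|k' - k|%N + `|l' - l|%N = 1)%N.

Definition is_vertex (d : R) (k l : int) (v : pt) : Prop :=
  exists i j : int, 0 <= i <= 1 /\ 0 <= j <= 1 /\
    v = (d * (k + i)%:~R, d * (l + j)%:~R).

Definition lattice_pt (d : R) (v : pt) : Prop :=
  exists k l : int, v = (d * k%:~R, d * l%:~R).
End Defs.

(* A boundary point q of an r-regular set lies on two circles of radius r whose
   open disks are inside X and inside its complement.  If the two neighbours of C
   are black they lie in the closed set X, hence outside the complementary disk; if
   they are white, X meets them in a null set, hence they miss the disk inside X
   (a disk around a point of a pixel covers a square of positive area in it).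
   Either way q lies on a circle of radius r > d sqrt 2 whose open disk misses both
   neighbours.  In coordinates centred at p, C is [0,d]^2 and the neighbours form
   the L-shape [d,2d] x [0,d] U [0,d] x [d,2d]; locating the centre of the circle
   relative to the L and comparing with a nearest point of the L shows that such a
   circle can pass through a point of C at distance >= d from p only at the lattice
   points (d,0), (0,d), (d,d), which are excluded since bdry X misses d Z^2. *)

From Pilot Require Import Defs.
From HB Require Import structures.
From mathcomp Require Import all_boot all_order all_algebra.
From mathcomp Require Import all_classical all_reals all_analysis.
From mathcomp Require Import complex.
From mathcomp Require Import ring lra zify.
Set Implicit Arguments. Unset Strict Implicit. Unset Printing Implicit Defensive.
Import Order.TTheory GRing.Theory Num.Theory.
Local Open Scope classical_set_scope.
Local Open Scope ring_scope.

Section Corner.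
Variable R : realFieldType.

Lemma sum_le_of_third_quadrant (d c1 c2 q1 q2 : R) :
  c1 < 0 -> c2 < 0 -> 0 <= q1 <= d -> 0 <= q2 <= d ->
  d ^+ 2 <= q1 ^+ 2 + q2 ^+ 2 ->
  (c1 - q1) ^+ 2 + (c2 - q2) ^+ 2 <= (c1 - d) ^+ 2 + c2 ^+ 2 ->
  (c1 - q1) ^+ 2 + (c2 - q2) ^+ 2 <= c1 ^+ 2 + (c2 - d) ^+ 2 ->
  q1 + q2 <= d.
Proof.
move=> c10 c20 /andP[q10 q1d] /andP[q20 q2d] far A B.
have A' : (- c2) * q2 <= (- c1) * (d - q1) by nra.
have B' : (- c1) * q1 <= (- c2) * (d - q2) by nra.
rewrite leNgt; apply/negP => h.
have : 0 < (- c1) * d * (q1 + q2 - d) by rewrite !mulr_gt0 //; lra.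
nra.
Qed.

Definition Lshape (d a b : R) : Prop :=
  (d <= a <= 2 * d /\ 0 <= b <= d) \/ (0 <= a <= d /\ d <= b <= 2 * d).

Lemma Lshape_sym (d a b : R) : Lshape d a b -> Lshape d b a.
Proof. by case=> [[]|[]]; [right|left]. Qed.

Lemma far_touching_point_corner_ordered (d r c1 c2 q1 q2 : R) :
  c1 <= c2 -> 0 < d -> 2 * d ^+ 2 < r ^+ 2 -> 0 <= q1 <= d -> 0 <= q2 <= d ->
  (c1 - q1) ^+ 2 + (c2 - q2) ^+ 2 = r ^+ 2 ->
  (forall a b, Lshape d a b -> r ^+ 2 <= (c1 - a) ^+ 2 + (c2 - b) ^+ 2) ->
  d ^+ 2 <= q1 ^+ 2 + q2 ^+ 2 ->
  [\/ q1 = d /\ q2 = 0, q1 = 0 /\ q2 = d | q1 = d /\ q2 = d].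
Proof.
move=> c12 dpos rd hq1 hq2 Eq HL far.
have /andP[q10 q1d] := hq1; have /andP[q20 q2d] := hq2.
have d0 : 0 <= d by lra.
have L1 a b : d <= a -> a <= 2 * d -> 0 <= b -> b <= d ->
    r ^+ 2 <= (c1 - a) ^+ 2 + (c2 - b) ^+ 2.
  by move=> *; apply: HL; left; split; apply/andP.
have L2 a b : 0 <= a -> a <= d -> d <= b -> b <= 2 * d ->
    r ^+ 2 <= (c1 - a) ^+ 2 + (c2 - b) ^+ 2.
  by move=> *; apply: HL; right; split; apply/andP.
have on_left : q1 = 0 -> [\/ q1 = d /\ q2 = 0, q1 = 0 /\ q2 = d | q1 = d /\ q2 = d].
  by move=> q1E; constructor 2; split => //; nra.
have [c10|c10] := ltrP c1 0.
- have [c20|c20] := ltrP c2 0.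
    have A := L1 d 0 (lexx d) ltac:(lra) (lexx 0) d0.
    have B := L2 0 d (lexx 0) d0 (lexx d) ltac:(lra).
    rewrite -Eq !subr0 in A B.
    have diag := sum_le_of_third_quadrant c10 c20 hq1 hq2 far A B.
    have /eqP : q1 * q2 = 0 by nra.
    rewrite mulf_eq0 => /orP[/eqP q1E|/eqP q2E]; first exact: on_left.
    by constructor 1; split => //; nra.
  have [c2d|c2d] := lerP c2 d.
    by apply: on_left; have := L2 0 d (lexx 0) d0 (lexx d) ltac:(lra); nra.
  have [c22d|c22d] := lerP c2 (2 * d).
    by apply: on_left; have := L2 0 c2 (lexx 0) d0 ltac:(lra) c22d; nra.
  have := L2 0 (2 * d) (lexx 0) d0 ltac:(lra) (lexx _).
  have : c1 ^+ 2 <= (c1 - q1) ^+ 2 by nra.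
  have : (c2 - 2 * d) ^+ 2 < (c2 - q2) ^+ 2 by nra.
  lra.
have [c1d|c1d] := lerP c1 d.
  have [c2d|c2d] := lerP c2 d.
    by have := L1 d c2 (lexx d) ltac:(lra) ltac:(lra) c2d; nra.
  have [c22d|c22d] := lerP c2 (2 * d).
    by have := L2 c1 c2 c10 c1d ltac:(lra) c22d; nra.
  by have := L2 c1 (2 * d) c10 c1d ltac:(lra) (lexx _); nra.
have := L1 d d (lexx d) ltac:(lra) d0 (lexx d) => corner.
by constructor 3; split; nra.
Qed.

Lemma far_touching_point_corner (d r c1 c2 q1 q2 : R) :
  0 < d -> 2 * d ^+ 2 < r ^+ 2 -> 0 <= q1 <= d -> 0 <= q2 <= d ->
  (c1 - q1) ^+ 2 + (c2 - q2) ^+ 2 = r ^+ 2 ->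
  (forall a b, Lshape d a b -> r ^+ 2 <= (c1 - a) ^+ 2 + (c2 - b) ^+ 2) ->
  d ^+ 2 <= q1 ^+ 2 + q2 ^+ 2 ->
  [\/ q1 = d /\ q2 = 0, q1 = 0 /\ q2 = d | q1 = d /\ q2 = d].
Proof.
move=> d0 rd hq1 hq2 Eq HL far.
have [c12|/ltW c21] := leP c1 c2.
  exact: far_touching_point_corner_ordered c12 d0 rd hq1 hq2 Eq HL far.
have HL' a b : Lshape d a b -> r ^+ 2 <= (c2 - a) ^+ 2 + (c1 - b) ^+ 2.
  by move=> /Lshape_sym /HL; rewrite addrC.
have [[-> ->]|[-> ->]|[-> ->]] := far_touching_point_corner_ordered c21 d0 rd hq2 hq1
  ltac:(lra) HL' ltac:(lra).
- by constructor 2.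
- by constructor 1.
- by constructor 3.
Qed.
End Corner.

Section Plane.
Variable R : realType.
Local Notation pt := (R * R)%type.
Local Notation edist := (@Defs.edist R).

Lemma edist_ge0 (x y : pt) : 0 <= edist x y.
Proof. exact: sqrtr_ge0. Qed.

Lemma sqr_edist (x y : pt) :
  edist x y ^+ 2 = (x.1 - y.1) ^+ 2 + (x.2 - y.2) ^+ 2.
Proof. by rewrite sqr_sqrtr // addr_ge0 ?sqr_ge0. Qed.

Lemma edist_lt_sqr (x y : pt) (e : R) :
  0 <= e -> (edist x y < e) = (edist x y ^+ 2 < e ^+ 2).
Proof. by move=> e0; rewrite ltr_pXn2r // nnegrE edist_ge0. Qed.

Lemma edist_le_sqr (x y : pt) (e : R) :
  0 <= e -> (e <= edist x y) = (e ^+ 2 <= edist x y ^+ 2).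
Proof. by move=> e0; rewrite ler_pXn2r // nnegrE edist_ge0. Qed.

Local Open Scope complex_scope.

Lemma edist_normc (x y : pt) :
  (edist x y)%:C = `|(x.1 +i* x.2) - (y.1 +i* y.2)|.
Proof. by rewrite normc_def. Qed.

Lemma edist_triangle (x y z : pt) : edist x z <= edist x y + edist y z.
Proof.
rewrite -lecR rmorphD /= !edist_normc (le_trans _ (ler_normD _ _)) //.
by rewrite addrA subrK.
Qed.

Local Close Scope complex_scope.

Lemma oball_sub (c z : pt) (rho : R) :
  edist c z < rho -> oball z (rho - edist c z) `<=` oball c rho.
Proof.
move=> czr w; rewrite /oball /= => zw.
by apply: le_lt_trans (edist_triangle c z w) _; lra.
Qed.

(* [X `&` pixel] is not known to be measurable; monotonicity holds for all sets
   because [area] integrates Lebesgue outer measures of sections. *)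
Lemma area_le (A B : set pt) : A `<=` B -> (area A <= area B)%E.
Proof.
move=> AB; rewrite /area /product_measure1 !ge0_integralE //.
apply: ereal_sup_le => _ [h hf <-]; exists h => // x.
apply: le_trans (hf x) _; rewrite /patch /= !in_setT.
by apply: le_mu_ext => y; rewrite /xsection /= !inE; exact: AB.
Qed.

Lemma measurable_rect (A B C D : R) :
  measurable (`[A, B]%classic `*` `[C, D]%classic : set pt).
Proof. by apply: measurableX; exact: measurable_itv. Qed.

Lemma area_rect (A B C D : R) : A < B -> C < D ->
  area (`[A, B]%classic `*` `[C, D]%classic) = ((B - A) * (D - C))%:E.
Proof.
move=> AB CD; rewrite /area product_measure1E; try exact: measurable_itv.
change (lebesgue_measure `[A, B]%classic * lebesgue_measure `[C, D]%classic
  = ((B - A) * (D - C))%:E)%E.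
by rewrite !lebesgue_measure_itv /= !lte_fin AB CD -!EFinB.
Qed.

Lemma square_sub_rect_ball (A B C D rho : R) (y : pt) :
  A < B -> C < D -> 0 < rho -> (`[A, B]%classic `*` `[C, D]%classic) y ->
  exists a b h, 0 < h /\ `[a, a + h]%classic `*` `[b, b + h]%classic
    `<=` (`[A, B]%classic `*` `[C, D]%classic) `&` oball y rho.
Proof.
move=> AB CD rho0 [/=]; rewrite !in_itv /= => /andP[Ay yB] /andP[Cy yD].
pose h := Num.min (Num.min (B - A) (D - C)) (rho / 2).
have [hBA hDC hrho] : [/\ h <= B - A, h <= D - C & h <= rho / 2].
  by rewrite !ge_min !lexx /= ?orbT.
have h0 : 0 < h by rewrite !lt_min !subr_gt0 AB CD divr_gt0.
have near_in (lo x hi : R) : lo <= x -> x <= hi -> h <= hi - lo ->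
    exists a, [/\ lo <= a, a + h <= hi, x - h <= a & a <= x].
  move=> *; have [xh|xh] := lerP (x + h) hi.
    by exists x; split; lra.
  by exists (hi - h); split; lra.
have [a [Aa aB ya ay]] := near_in _ _ _ Ay yB hBA.
have [b [Cb bD yb b_y]] := near_in _ _ _ Cy yD hDC.
exists a, b, h; split => // z [/=]; rewrite !in_itv /= => /andP[? ?] /andP[? ?].
split; first by split => /=; apply/andP; split; lra.
rewrite /oball /= (edist_lt_sqr y z (ltW rho0)) sqr_edist.
have : (y.1 - z.1) ^+ 2 <= h ^+ 2 by nra.
have : (y.2 - z.2) ^+ 2 <= h ^+ 2 by nra.
nra.
Qed.

Section Rectangle.
Variables (A B C D : R).
Hypotheses (AB : A < B) (CD : C < D).
Let rect : set pt := `[A, B]%classic `*` `[C, D]%classic.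

Lemma area_gt0_of_ball_sub (U : set pt) (y : pt) (rho : R) :
  0 < rho -> rect y -> oball y rho `<=` U -> (0 < area (U `&` rect))%E.
Proof.
move=> rho0 ry yU; have [a [b [h [h0 sq]]]] := square_sub_rect_ball AB CD rho0 ry.
set S := `[a, a + h]%classic `*` `[b, b + h]%classic.
have SU : S `<=` U `&` rect by move=> z /sq [rz /yU Uz].
apply: lt_le_trans (area_le SU).
by rewrite area_rect ?ltrDl // lte_fin ![_ + h]addrC !addrK mulr_gt0.
Qed.

Lemma area_lt_of_ball_disjoint (U : set pt) (y : pt) (rho : R) :
  0 < rho -> rect y -> oball y rho `<=` ~` U -> (area (U `&` rect) < area rect)%E.
Proof.
move=> rho0 ry yU; have [a [b [h [h0 sq]]]] := square_sub_rect_ball AB CD rho0 ry.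
set S := `[a, a + h]%classic `*` `[b, b + h]%classic.
have S_rect : rect `&` S = S by apply/setIidr => z /sq[].
apply: le_lt_trans (area_le (_ : _ `<=` rect `\` S)) _.
  by move=> z [Uz rz]; split => // /sq[_ /yU].
have rectE : area rect = ((B - A) * (D - C))%:E by exact: area_rect.
have SE : area S = (h * h)%:E.
  by rewrite area_rect ?ltrDl // ![_ + h]addrC !addrK.
have -> : area (rect `\` S) = (area rect - area (rect `&` S))%E.
  apply: measureD; try exact: measurable_rect.
  by change (area rect < +oo)%E; rewrite rectE ltry.
by rewrite S_rect rectE SE -EFinB lte_fin ltrBlDr ltrDl mulr_gt0.
Qed.

End Rectangle.

Lemma pixelE (d : R) (k l : int) : pixel d k l =
  `[d * k%:~R, d * (k + 1)%:~R]%classic `*` `[d * l%:~R, d * (l + 1)%:~R]%classic.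
Proof. by apply/seteqP; split => z /=; rewrite !in_itv. Qed.

Lemma pixel_side_lt (d : R) (k : int) : 0 < d -> d * k%:~R < d * (k + 1)%:~R.
Proof. by move=> d0; rewrite ltr_pM2l // ltr_int ltzD1. Qed.

Lemma area_pixel (d : R) (k l : int) : 0 < d -> area (pixel d k l) = (d ^+ 2)%:E.
Proof.
move=> d0; rewrite pixelE area_rect ?pixel_side_lt //.
by congr (_%:E); rewrite !intrD; ring.
Qed.

Lemma black_pixel_sub (X : set pt) (d : R) (k l : int) :
  0 < d -> eclosed X -> black X d k l -> pixel d k l `<=` X.
Proof.
move=> d0 cX blk z Pz; apply: contrapT => nXz.
have [e [e0 eX]] := cX z nXz; rewrite pixelE in Pz.
have := area_lt_of_ball_disjoint (pixel_side_lt k d0) (pixel_side_lt l d0) e0 Pz eX.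
by rewrite -pixelE area_pixel // blk ltxx.
Qed.

Lemma white_pixel_outside_ball (X : set pt) (d rho : R) (k l : int) (c z : pt) :
  0 < d -> white X d k l -> oball c rho `<=` X -> pixel d k l z -> rho <= edist c z.
Proof.
move=> d0 wht cX Pz; rewrite leNgt; apply/negP => czr; rewrite pixelE in Pz.
have gap : 0 < rho - edist c z by rewrite subr_gt0.
have := area_gt0_of_ball_sub (pixel_side_lt k d0) (pixel_side_lt l d0)
  gap Pz (subset_trans (oball_sub czr) cX).
by rewrite -pixelE wht ltxx.
Qed.

Lemma eclosed_bdry (X : set pt) (q : pt) : eclosed X -> bdry X q -> X q.
Proof.
move=> cX bq; apply: contrapT => nXq; have [e [e0 eX]] := cX q nXq.
by have [[y [qy /(eX y qy)]]] := bq e e0.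
Qed.

Lemma regular_touching_balls (r : R) (X : set pt) (q : pt) :
  r_regular r X -> bdry X q -> exists xb xw,
    [/\ oball xb r `<=` X, oball xw r `<=` ~` X, edist xb q = r & edist xw q = r].
Proof.
move=> [cX reg] bq; have [xb [xw [bX [wX E]]]] := reg q bq.
have [qb qw] : (cball xb r `&` cball xw r) q by rewrite E.
exists xb, xw; split => //; apply/le_anti.
- rewrite qb /= leNgt; apply/negP => bqr.
  have [_ [y [qy nXy]]] := bq (r - edist xb q) (ltac:(by rewrite subr_gt0)).
  exact/nXy/bX/(oball_sub bqr).
- by rewrite qw /= leNgt; apply/negP => /wX; apply; exact: eclosed_bdry.
Qed.

Lemma touching_disk_avoids_pixels (r d : R) (X : set pt) (q : pt) (k1 l1 k2 l2 : int) :
  0 < d -> r_regular r X -> bdry X q ->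
  (black X d k1 l1 /\ black X d k2 l2) \/ (white X d k1 l1 /\ white X d k2 l2) ->
  exists c, edist c q = r /\
    forall z, pixel d k1 l1 z \/ pixel d k2 l2 z -> r <= edist c z.
Proof.
move=> d0 reg bq colour.
have [xb [xw [bX wX bq_r wq_r]]] := regular_touching_balls reg bq.
case: colour => [[blk1 blk2]|[wht1 wht2]].
- exists xw; split => // z Pz; rewrite leNgt; apply/negP => /wX; apply.
  by case: Pz; apply: black_pixel_sub => //; case: reg.
- exists xb; split => // z [Pz|Pz].
  + exact: white_pixel_outside_ball d0 wht1 bX Pz.
  + exact: white_pixel_outside_ball d0 wht2 bX Pz.
Qed.

End Plane.

Lemma direct_neighbour_avoiding (k l k' l' i j : int) :
  direct_neighbour k l k' l' -> 0 <= i <= 1 -> 0 <= j <= 1 ->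
  ~ ((k' <= k + i <= k' + 1) /\ (l' <= l + j <= l' + 1)) ->
  (k' = k + (1 - 2 * i) /\ l' = l) \/ (k' = k /\ l' = l + (1 - 2 * j)).
Proof. rewrite /direct_neighbour; lia. Qed.

Section Frame.
Variable R : realType.
Local Notation pt := (R * R)%type.
Local Notation edist := (@Defs.edist R).

Lemma pixel_lattice (d : R) (k l a b : int) : 0 < d ->
  pixel d k l (d * a%:~R, d * b%:~R) <-> (k <= a <= k + 1) /\ (l <= b <= l + 1).
Proof. by move=> d0; rewrite /pixel /= !ler_pM2l // !ler_int. Qed.

Lemma neighbours_avoiding_vertex (d : R) (k l k1 l1 k2 l2 i j : int) :
  0 < d -> 0 <= i <= 1 -> 0 <= j <= 1 ->
  direct_neighbour k l k1 l1 -> direct_neighbour k l k2 l2 -> (k1, l1) <> (k2, l2) ->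
  let p := (d * (k + i)%:~R, d * (l + j)%:~R) in
  ~ pixel d k1 l1 p -> ~ pixel d k2 l2 p ->
  forall z, pixel d (k + (1 - 2 * i)) l z \/ pixel d k (l + (1 - 2 * j)) z ->
    pixel d k1 l1 z \/ pixel d k2 l2 z.
Proof.
move=> d0 hi hj n1 n2 + p; rewrite /p !pixel_lattice // => + p1 p2.
case: (direct_neighbour_avoiding n1 hi hj p1) => -[-> ->];
case: (direct_neighbour_avoiding n2 hi hj p2) => -[-> ->] // _.
all: move=> z [] Pz; by [left | right].
Qed.

Lemma sign_sqr (i : int) : 0 <= i <= 1 -> ((1 - 2 * i)%:~R : R) ^+ 2 = 1.
Proof.
move=> hi; have [->|->] : i = 0 \/ i = 1 by lia.
  by rewrite mulr0 subr0 expr1n.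
by rewrite mulr1 intrB /=; ring.
Qed.

Lemma reflect_interval (d x : R) (k i m : int) : 0 < d -> 0 <= i <= 1 ->
  (d * (k + (1 - 2 * i) * m)%:~R <= d * (k + i)%:~R + (1 - 2 * i)%:~R * x
     <= d * (k + (1 - 2 * i) * m + 1)%:~R)
  = (d * m%:~R <= x <= d * (m + 1)%:~R).
Proof.
move=> d0 hi; have [->|->] : i = 0 \/ i = 1 by lia.
- rewrite (_ : 1 - 2 * 0 = 1 :> int) // !mul1r addr0.
  rewrite !(intrD, mulrDr) mulr1.
  by apply/idP/idP => /andP[? ?]; apply/andP; split; lra.
- rewrite (_ : 1 - 2 * 1 = -1 :> int) // !mulN1r.
  rewrite !(intrD, intrN, mulrDr, mulrN) mulr1.
  by apply/idP/idP => /andP[? ?]; apply/andP; split; lra.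
Qed.

(* Coordinates centred at the vertex (d(k+i), d(l+j)) of pixel (k,l), with axes
   pointing into the pixel: the pixel becomes [0,d]^2 and its two direct
   neighbours avoiding the vertex form the L-shape of [Lshape]. *)
Definition vertex_frame (d : R) (k l i j : int) (z : pt) : pt :=
  (d * (k + i)%:~R + (1 - 2 * i)%:~R * z.1, d * (l + j)%:~R + (1 - 2 * j)%:~R * z.2).

Section VertexFrame.
Variables (d : R) (k l i j : int).
Hypotheses (d0 : 0 < d) (hi : 0 <= i <= 1) (hj : 0 <= j <= 1).
Local Notation frame := (vertex_frame d k l i j).

Lemma pixel_vertex_frame (m n : int) (z : pt) :
  pixel d (k + (1 - 2 * i) * m) (l + (1 - 2 * j) * n) (frame z) <-> pixel d m n z.
Proof. by rewrite /pixel /= !reflect_interval. Qed.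

Lemma edist_vertex_frame (x y : pt) : edist (frame x) (frame y) = edist x y.
Proof.
have shift (p s a b : R) : s ^+ 2 = 1 -> (p + s * a - (p + s * b)) ^+ 2 = (a - b) ^+ 2.
  by move=> s2; rewrite -[RHS]mul1r -s2 -exprMn; congr (_ ^+ 2); ring.
by rewrite /Defs.edist /= !shift ?sign_sqr.
Qed.

Lemma vertex_frame_surj (q : pt) : exists u, frame u = q.
Proof.
exists ((1 - 2 * i)%:~R * (q.1 - d * (k + i)%:~R),
        (1 - 2 * j)%:~R * (q.2 - d * (l + j)%:~R)).
rewrite /vertex_frame /= !mulrA -!expr2 !sign_sqr // !mul1r.
by case: q => ? ? /=; congr pair; ring.
Qed.

Lemma lattice_vertex_frame (a b : int) : lattice_pt d (frame (d * a%:~R, d * b%:~R)).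
Proof.
exists (k + i + (1 - 2 * i) * a), (l + j + (1 - 2 * j) * b).
by rewrite /vertex_frame /= !(intrD, intrM); congr pair; ring.
Qed.

End VertexFrame.

Lemma vertex_near_touching_point (r d : R) (k l i j : int) (c q : pt) :
  0 < d -> d * Num.sqrt 2 < r -> 0 <= i <= 1 -> 0 <= j <= 1 ->
  pixel d k l q -> ~ lattice_pt d q -> edist c q = r ->
  (forall z, pixel d (k + (1 - 2 * i)) l z \/ pixel d k (l + (1 - 2 * j)) z ->
     r <= edist c z) ->
  edist (d * (k + i)%:~R, d * (l + j)%:~R) q < d.
Proof.
move=> d0 dr hi hj.
have dsqrt2_ge0 : 0 <= d * Num.sqrt 2 by rewrite mulr_ge0 ?sqrtr_ge0 ?ltW.
have r0 : 0 <= r by rewrite ltW // (le_lt_trans dsqrt2_ge0).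
have rd : 2 * d ^+ 2 < r ^+ 2.
  have : (d * Num.sqrt 2) ^+ 2 < r ^+ 2 by nra.
  by rewrite exprMn sqr_sqrtr ?ler0n // mulrC.
have [u <-] := vertex_frame_surj d k l hi hj q.
have [c' <-] := vertex_frame_surj d k l hi hj c.
move=> Cq nlat cq far.
have frame0 : vertex_frame d k l i j (0, 0) = (d * (k + i)%:~R, d * (l + j)%:~R).
  by rewrite /vertex_frame /= !mulr0 !addr0.
rewrite -frame0 !edist_vertex_frame // in cq far *.
have frame_pixel m n z := pixel_vertex_frame k l d0 hi hj m n z.
have pixel00 : pixel d 0 0 u.
  by apply/frame_pixel; rewrite !mulr0 !addr0.
have [/andP[u10 u1d] /andP[u20 u2d]] := pixel00; 
  rewrite /= !mulr0 !add0r !mulr1 in u10 u1d u20 u2d.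
have nbr z : Lshape d z.1 z.2 ->
    pixel d (k + (1 - 2 * i)) l (vertex_frame d k l i j z) \/
    pixel d k (l + (1 - 2 * j)) (vertex_frame d k l i j z).
  have := frame_pixel 1 0 z; have := frame_pixel 0 1 z.
  rewrite !mulr1 !mulr0 !addr0 => -> ->; rewrite /pixel /= !intrD /=.
  by case=> -[/andP[? ?] /andP[? ?]]; [left|right]; split; apply/andP; split; lra.
have Eq : (c'.1 - u.1) ^+ 2 + (c'.2 - u.2) ^+ 2 = r ^+ 2 by rewrite -sqr_edist cq.
have HL a b : Lshape d a b -> r ^+ 2 <= (c'.1 - a) ^+ 2 + (c'.2 - b) ^+ 2.
  by move=> /(nbr (a, b)) /far; rewrite edist_vertex_frame // edist_le_sqr // sqr_edist.
have corner (a b : int) : u <> (d * a%:~R, d * b%:~R).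
  by move=> uE; apply: nlat; rewrite uE; exact: lattice_vertex_frame.
rewrite edist_lt_sqr ?ltW // sqr_edist /= !sub0r !sqrrN ltNge; apply/negP => far_u.
have := far_touching_point_corner d0 rd _ _ Eq HL far_u.
rewrite u10 u1d u20 u2d => /(_ isT isT) [] [u1E u2E].
- by apply: (corner 1 0); rewrite [u]surjective_pairing u1E u2E /= mulr1 mulr0.
- by apply: (corner 0 1); rewrite [u]surjective_pairing u1E u2E /= mulr1 mulr0.
- by apply: (corner 1 1); rewrite [u]surjective_pairing u1E u2E /= mulr1.
Qed.

End Frame.

Theorem lemma5p1 (R : realType) (r d : R) (X : set (R * R))
  (k l k1 l1 k2 l2 : int) (p q : R * R) :
  0 < r -> 0 < d -> d * Num.sqrt 2 < r ->
  bounded2 X -> r_regular r X ->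
  (forall v, lattice_pt d v -> ~ bdry X v) ->
  grey X d k l ->
  direct_neighbour k l k1 l1 -> direct_neighbour k l k2 l2 ->
  (k1, l1) <> (k2, l2) ->
  (exists v, is_vertex d k1 l1 v /\ is_vertex d k2 l2 v) ->
  ((black X d k1 l1 /\ black X d k2 l2) \/ (white X d k1 l1 /\ white X d k2 l2)) ->
  is_vertex d k l p -> ~ pixel d k1 l1 p -> ~ pixel d k2 l2 p ->
  bdry X q -> pixel d k l q ->
  oball p d q.
Proof.
move=> _ d0 dr _ reg nonlat _ n1 n2 n12 _ colour [i [j [hi [hj ->]]]] p1 p2 bq Cq.
have [c [cq far]] := touching_disk_avoids_pixels d0 reg bq colour.
apply: (vertex_near_touching_point d0 dr hi hj Cq _ cq).
  by move=> /nonlat; apply.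
by move=> z /(neighbours_avoiding_vertex d0 hi hj n1 n2 n12 p1 p2); exact: far.
Qed.
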